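(* Let $k\ge3$ be an integer and let $a>0$ and $\alpha>0$ be real numbers. W.h.p. over the choice of $\Phi=\Phi(k,n,\lfloor\alpha n\rfloor)$, for every set of clauses $Y$ with $|Y|\ge a\log n$, we have $|\mathrm{var}(Y)|\ge a\log n$.
   Context: The random $k$-CNF formula $\Phi(k,n,m)$ is uniform over $k$-CNF formulas with $n$ variables and $m$ clauses of $k$ literals each (repetitions allowed); w.h.p. means with probability $1-o(1)$ as $n\to\infty$. For a set of clauses $Y$, $\mathrm{var}(Y)$ is the set of variables appearing in some clause of $Y$. *)

From HB Require Import structures.
From mathcomp Require Import all_boot all_order all_algebra.
From mathcomp Require Import all_classical all_reals all_analysis.
Set Implicit Arguments. Unset Strict Implicit. Unset Printing Implicit Defensive.
Import Order.TTheory GRing.Theory Num.Theory.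
Local Open Scope ring_scope.

(* A literal over variables 'I_n: (variable, sign); true = positive. *)
Definition literal (n : nat) := ('I_n * bool)%type.
(* A k-clause: an ordered k-tuple of literals (repetitions allowed). *)
Definition clause (n k : nat) := {ffun 'I_k -> literal n}.
Definition formula (n k m : nat) := {ffun 'I_m -> clause n k}.

Definition var_of (n k m : nat) (Phi : formula n k m) (Y : {set 'I_m}) : {set 'I_n} :=
  [set x | [exists i in Y, exists j : 'I_k, (Phi i j).1 == x]].

Definition good_event (R : realType) (a : R) (n k m : nat) (Phi : formula n k m) : bool :=
  [forall Y : {set 'I_m},
     (a * ln (n%:R : R) <= (#|Y|%:R : R)) ==> (a * ln (n%:R : R) <= (#|var_of Phi Y|%:R : R))].

Definition prob_good (R : realType) (a : R) (n k m : nat) : R :=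
  (#|[set Phi : formula n k m | good_event a Phi]|%:R : R) / (#|{: formula n k m}|%:R : R).

From HB Require Import structures.
From mathcomp Require Import all_boot all_order all_algebra.
From mathcomp Require Import all_classical all_reals all_analysis.
From mathcomp Require Import unstable ring lra.
Import Order.TTheory GRing.Theory Num.Theory numFieldNormedType.Exports.
Local Open Scope ring_scope.

(* If some set Y of at least a log n clauses spans fewer than a log n
   variables, keeping |var(Y)| + 1 of its clauses yields a set of at most
   B = floor(a log n) + 1 clauses spanning fewer variables than clauses.
   A fixed set of j clauses has all its variables in a fixed set of c < j
   variables with probability (c/n)^(kj), so a union bound over the at most
   m^j choices of the clauses and n^j choices of the variables bounds the
   probability of such a set by sum_(j <= B) j (m n (B/n)^k)^j
   = O(B^(k+2) / n^(k-2)), which is O(log^(k+2) n / n) since m <= alpha n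
   and k >= 3. *)

Section UniformProbability.
Context {R : numFieldType} {T : finType}.
Implicit Types A B : {set T}.

Definition uprob A : R := #|A|%:R / #|T|%:R.

Lemma uprob_le1 A : uprob A <= 1.
Proof.
rewrite /uprob; have [->|T0] := posnP #|T|; first by rewrite invr0 mulr0 ler01.
by rewrite ler_pdivrMr ?ltr0n // mul1r ler_nat max_card.
Qed.

Lemma uprobC A : (0 < #|T|)%N -> uprob (~: A) = 1 - uprob A.
Proof.
move=> T0; rewrite /uprob cardsCs finset.setCK natrB ?max_card // mulrBl divff //.
by rewrite pnatr_eq0 -lt0n.
Qed.

Lemma le_uprob [A B] : A \subset B -> uprob A <= uprob B.
Proof. by move=> AB; rewrite ler_wpM2r ?invr_ge0 ?ler0n // ler_nat subset_leq_card. Qed.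

Lemma uprob_bigcup (I : Type) (r : seq I) (P : pred I) (F : I -> {set T}) :
  uprob (\bigcup_(i <- r | P i) F i) <= \sum_(i <- r | P i) uprob (F i).
Proof.
by rewrite /uprob -mulr_suml -natr_sum ler_wpM2r ?invr_ge0 ?ler0n // ler_nat card_big_setU.
Qed.

End UniformProbability.

Lemma leq_bin_exp n c : ('C(n, c) <= n ^ c)%N.
Proof.
apply: (@leq_trans ('C(n, c) * c`!)); first by rewrite leq_pmulr ?fact_gt0.
rewrite bin_ffact ffact_prod -[X in (_ <= _ ^ X)%N](card_ord c) -prod_nat_const.
by apply: leq_prod => i _; rewrite leq_subr.
Qed.

Lemma natmul_bin_le {R : numDomainType} (z : R) N c :
  0 <= z -> z *+ 'C(N, c) <= z * N%:R ^+ c.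
Proof. by move=> z0; rewrite -[z *+ _]mulr_natr ler_wpM2l // -natrX ler_nat leq_bin_exp. Qed.

Lemma ex_subset_card {T : finType} {A : {set T}} {c : nat} :
  (c <= #|A|)%N -> exists2 B : {set T}, B \subset A & #|B| = c.
Proof.
elim: c => [|c IHc] cA; first by exists finset.set0; rewrite ?finset.sub0set ?cards0.
have [B BA Bc] := IHc (ltnW cA); subst c.
have /card_gt0P [x] : (0 < #|A :\: B|)%N by rewrite cardsDS // subn_gt0.
rewrite inE => /andP [xB xA].
by exists (x |: B); rewrite ?finset.subUset ?finset.sub1set ?xA ?BA // cardsU1 xB.
Qed.

Lemma sum_sets_card_lt (T : finType) {V : nmodType} (F : nat -> V) t :
  \sum_(A : {set T} | (#|A| < t)%N) F #|A| = \sum_(j < t) F j *+ 'C(#|T|, j).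
Proof.
rewrite (partition_big (fun A : {set T} => inord #|A| : 'I_t.+1) (fun j => (j < t)%N))
  => [|A At]; last by rewrite inordK // ltnW.
rewrite (big_ord_widen t.+1 (fun j => F j *+ 'C(#|T|, j))) //; apply: eq_bigr => j jt.
rewrite -card_draws -sumr_const.
apply: eq_big => [A|A /andP [At /eqP <-]]; last by rewrite inordK // ltnW.
rewrite inE; apply/andP/eqP => [[At /eqP <-]|Aj]; first by rewrite inordK // ltnW.
by split; [rewrite Aj | apply/eqP/val_inj; rewrite /= inordK Aj // ltnW].
Qed.

Definition clauses_over (n k : nat) (V : {set 'I_n}) : {set clause n k} :=
  [set c : clause n k | [forall j, (c j).1 \in V]].

Definition dense_formulas (n k m B : nat) : {set formula n k m} :=
  [set Phi | [exists Y : {set 'I_m}, (#|Y| <= B)%N && (#|var_of Phi Y| < #|Y|)%N]].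

Section RandomFormula.
Context {n k m : nat}.

Lemma card_clauses_over (V : {set 'I_n}) : #|clauses_over n k V| = ((#|V| * 2) ^ k)%N.
Proof.
have -> : #|clauses_over n k V| = #|@ffun_on 'I_k [pred l : literal n | l.1 \in V]|.
  by apply: eq_card => c; rewrite inE; apply/forallP/forallP => cV j; have := cV j; rewrite inE.
rewrite card_ffun_on card_ord -card_bool -cardsT -cardsX; congr (_ ^ _)%N.
by apply: eq_card => -[x b]; rewrite !inE andbT.
Qed.

Lemma card_formula : #|{: formula n k m}| = (((n * 2) ^ k) ^ m)%N.
Proof. by rewrite !card_ffun card_prod card_bool !card_ord. Qed.

Lemma var_ofS (Phi : formula n k m) (Y1 Y2 : {set 'I_m}) :
  Y1 \subset Y2 -> var_of Phi Y1 \subset var_of Phi Y2.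
Proof.
move=> /fintype.subsetP Y12; apply/fintype.subsetP => x; rewrite !inE.
by case/existsP => i /andP [iY1 ix]; apply/existsP; exists i; rewrite Y12.
Qed.

Lemma card_var_of_sub (Y : {set 'I_m}) (V : {set 'I_n}) :
  #|[set Phi : formula n k m | var_of Phi Y \subset V]| =
  (((#|V| * 2) ^ k) ^ #|Y| * ((n * 2) ^ k) ^ #|~: Y|)%N.
Proof.
pose F i := if i \in Y then clauses_over n k V else [set: clause n k].
have -> : #|[set Phi : formula n k m | var_of Phi Y \subset V]| = #|family F|.
  apply: eq_card => Phi; rewrite inE; apply/fintype.subsetP/forallP => [YV i | PhiF x].
    change (Phi i \in F i); rewrite /F; case: ifP => iY; rewrite inE //; apply/forallP => j.
    by apply: YV; rewrite inE; apply/existsP; exists i; rewrite iY; apply/existsP; exists j.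
  rewrite inE => /existsP [i /andP [iY /existsP [j /eqP <-]]].
  by have : Phi i \in F i := PhiF i; rewrite /F iY inE => /forallP.
rewrite card_family foldrE big_image /= (bigID (mem Y)) /=.
rewrite (eq_bigr (fun=> ((#|V| * 2) ^ k)%N)) => [|i iY]; last by rewrite /F iY card_clauses_over.
rewrite [X in (_ * X)%N](eq_bigr (fun=> ((n * 2) ^ k)%N)) => [|i iY]; last first.
  by rewrite /F (negbTE iY) cardsT card_ffun card_prod card_bool !card_ord.
rewrite !prod_nat_const; congr (_ * _ ^ _)%N.
by apply: eq_card => i; rewrite inE.
Qed.

Lemma uprob_var_of_sub {R : numFieldType} (Y : {set 'I_m}) (V : {set 'I_n}) :
  (0 < n)%N ->
  uprob [set Phi : formula n k m | var_of Phi Y \subset V] =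
  (#|V|%:R / n%:R) ^+ (k * #|Y|) :> R.
Proof.
move=> n0; rewrite /uprob card_var_of_sub card_formula.
have -> : (((n * 2) ^ k) ^ m = ((n * 2) ^ k) ^ #|Y| * ((n * 2) ^ k) ^ #|~: Y|)%N.
  by rewrite -expnD cardsC card_ord.
rewrite !natrM invfM mulrACA divff ?pnatr_eq0 -?lt0n ?expn_gt0 ?muln_gt0 ?n0 // mulr1.
rewrite !natrX -!exprM -expr_div_n !natrM; congr (_ ^+ _).
by rewrite invfM mulrACA divff ?pnatr_eq0 // mulr1.
Qed.

Lemma uprob_dense_le_sum {R : numFieldType} B : (0 < n)%N ->
  uprob (dense_formulas n k m B) <=
  \sum_(j < B.+1) (\sum_(c < j) (c%:R / n%:R) ^+ (k * j) *+ 'C(n, c)) *+ 'C(m, j) :> R.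
Proof.
move=> n0.
have dense_sub : dense_formulas n k m B \subset
    \bigcup_(Y : {set 'I_m} | (#|Y| < B.+1)%N)
      \bigcup_(V : {set 'I_n} | (#|V| < #|Y|)%N) [set Phi | var_of Phi Y \subset V].
  apply/fintype.subsetP => Phi; rewrite inE => /existsP [Y /andP [YB VY]].
  by apply/bigcupP; exists Y => //; apply/bigcupP; exists (var_of Phi Y); rewrite ?inE.
apply: (le_trans (le_uprob dense_sub)); apply: (le_trans (uprob_bigcup _ _ _ _)).
have := sum_sets_card_lt 'I_m
  (fun j => \sum_(c < j) (c%:R / n%:R) ^+ (k * j) *+ 'C(n, c) : R) B.+1.
rewrite card_ord => <-; apply: ler_sum => Y _; apply: (le_trans (uprob_bigcup _ _ _ _)).
have := sum_sets_card_lt 'I_n (fun c => (c%:R / n%:R) ^+ (k * #|Y|) : R) #|Y|.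
by rewrite card_ord => <-; apply: ler_sum => V _; rewrite uprob_var_of_sub.
Qed.

Lemma dense_term_le {R : realFieldType} B j : (0 < n)%N -> (j <= B)%N ->
  (\sum_(c < j) (c%:R / n%:R) ^+ (k * j) *+ 'C(n, c)) *+ 'C(m, j) <=
  j%:R * (m%:R * n%:R * (B%:R / n%:R) ^+ k) ^+ j :> R.
Proof.
move=> n0 jB.
have c_le (c : 'I_j) : (c%:R / n%:R) ^+ (k * j) *+ 'C(n, c) <=
    (B%:R / n%:R) ^+ (k * j) * n%:R ^+ j :> R.
  apply: le_trans (natmul_bin_le _ _ _ _) _; first by rewrite exprn_ge0 ?divr_ge0 ?ler0n.
  apply: ler_pM; rewrite ?exprn_ge0 ?divr_ge0 ?ler0n //.
    rewrite lerXn2r ?nnegrE ?divr_ge0 ?ler0n // ler_pM2r ?invr_gt0 ?ltr0n // ler_nat.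
    exact: leq_trans (ltnW (ltn_ord c)) jB.
  by rewrite -!natrX ler_nat leq_pexp2l // ltnW.
rewrite [leRHS](_ : _ = j%:R * ((B%:R / n%:R) ^+ (k * j) * n%:R ^+ j) * m%:R ^+ j);
  last by rewrite exprM !exprMn; ring.
apply: le_trans (natmul_bin_le _ _ _ _) _.
  by rewrite sumr_ge0 // => c _; rewrite mulrn_wge0 // exprn_ge0.
rewrite ler_wpM2r ?exprn_ge0 ?ler0n //.
apply: le_trans (ler_sum _ (fun c _ => c_le c)) _.
by rewrite sumr_const card_ord [leRHS]mulr_natl.
Qed.

Lemma uprob_dense_le {R : realFieldType} B (x : R) : (0 < n)%N ->
  m%:R * n%:R * (B%:R / n%:R) ^+ k <= x -> uprob (dense_formulas n k m B) <= B.+1%:R ^+ 2 * x.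
Proof.
move=> n0; set y := _ * _ * _ => yx.
have y0 : 0 <= y by rewrite !mulr_ge0 ?exprn_ge0 ?divr_ge0 ?ler0n.
have x0 : 0 <= x := le_trans y0 yx.
have [x1|x1] := lerP x 1; last first.
  apply: le_trans (uprob_le1 _) _; apply: le_trans (ltW x1) _.
  by rewrite ler_peMl // exprn_ege1 // ler1n.
apply: le_trans (uprob_dense_le_sum _ n0) _.
apply: le_trans (ler_sum _ (fun (j : 'I_B.+1) _ => dense_term_le B j n0 (ltn_ord j))) _.
have jy_le (j : 'I_B.+1) : j%:R * y ^+ j <= B%:R * x.
  have [->|j0] := posnP j; first by rewrite mul0r mulr_ge0 ?ler0n.
  apply: ler_pM; rewrite ?ler0n ?exprn_ge0 //; first by rewrite ler_nat -ltnS.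
  exact: le_trans (ler_iXnr j0 y0 (le_trans yx x1)) yx.
apply: le_trans (ler_sum _ (fun j _ => jy_le j)) _.
rewrite sumr_const card_ord -[leLHS]mulr_natl mulrA ler_wpM2r // -natrM -natrX ler_nat.
by rewrite expnS expn1 leq_mul2l leqnSn orbT.
Qed.

Lemma not_good_dense [R : realType] [a : R] [Phi : formula n k m] :
  0 <= a * ln n%:R -> ~~ good_event a Phi ->
  Phi \in dense_formulas n k m (Num.truncn (a * ln n%:R)).+1.
Proof.
move=> aln0 /forallPn [Y]; rewrite negb_imply -ltNge => /andP [YL VL].
have VT : (#|var_of Phi Y| <= Num.truncn (a * ln n%:R))%N by rewrite truncn_ge_nat // ltW.
have VY : (#|var_of Phi Y| < #|Y|)%N by rewrite -(ltr_nat R); apply: lt_le_trans YL.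
have [Z ZY cardZ] := ex_subset_card VY.
rewrite inE; apply/existsP; exists Z; rewrite cardZ ltnS VT ltnS /=.
exact/subset_leq_card/var_ofS.
Qed.

End RandomFormula.

Lemma prob_goodE (R : realType) (a : R) n k m :
  prob_good a n k m = uprob [set Phi : formula n k m | good_event a Phi].
Proof. by []. Qed.

Lemma dense_ratio_le (R : realFieldType) (m n k : nat) (alpha b b' : R) :
  (2 < k)%N -> (0 < n)%N -> m%:R <= alpha * n%:R -> 0 <= b <= b' ->
  m%:R * n%:R * (b / n%:R) ^+ k <= alpha * b' ^+ k / n%:R.
Proof.
move=> k2 n0 mn /andP [b0 bb'].
have nR : 0 < n%:R :> R by rewrite ltr0n.
have alpha0 : 0 <= alpha by rewrite -(pmulr_lge0 _ nR) (le_trans _ mn).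
case: k k2 => [|[|[|k]]] // _.
apply: (@le_trans _ _ (alpha * n%:R * n%:R * (b / n%:R) ^+ k.+3)).
  by rewrite ler_wpM2r ?exprn_ge0 ?divr_ge0 ?ler0n // ler_wpM2r ?ler0n.
have -> : alpha * n%:R * n%:R * (b / n%:R) ^+ k.+3 = alpha * b ^+ k.+3 / n%:R / n%:R ^+ k.
  by rewrite expr_div_n !exprS; field; rewrite ?expf_neq0 gt_eqF.
have nk1 : 1 <= n%:R ^+ k :> R by rewrite exprn_ege1 // ler1n.
rewrite ler_pdivrMr ?(lt_le_trans ltr01) // (le_trans _ (ler_peMr _ nk1)) //.
  by rewrite ler_wpM2r ?invr_ge0 ?ler0n // ler_wpM2l // lerXn2r ?nnegrE ?(le_trans b0).
by rewrite mulr_ge0 ?invr_ge0 ?ler0n // mulr_ge0 // exprn_ge0 // (le_trans b0).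
Qed.

Local Open Scope classical_set_scope.

Section Asymptotics.
Variable R : realType.

Lemma lnX_le_fact (x : R) p : 1 <= x -> ln x ^+ p.+1 <= p.+1`!%:R * x.
Proof.
move=> x1; have := expR_ge1Dxn p (ln_ge0 x1); rewrite lnK ?posrE ?(lt_le_trans ltr01) // => h.
by rewrite -ler_pdivrMl ?ltr0n ?fact_gt0 // mulrC; lra.
Qed.

Lemma nbhs_infty_ln_ger (c : R) : \forall n \near \oo, c <= ln (n%:R : R).
Proof.
near=> n; have n0 : (0 < n)%N by near: n; exact: nbhs_infty_gt.
rewrite -ler_expR lnK ?posrE ?ltr0n //; near: n; exact: nbhs_infty_ger.
Unshelve. all: by end_near. Qed.

Lemma cvgn_lnX_div p : (ln n%:R ^+ p / n%:R : R) @[n --> \oo] --> 0.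
Proof.
apply/cvgr0Pnorm_le => e e0; near=> n.
have n1 : 1 <= n%:R :> R by near: n; exact: nbhs_infty_ger.
have ln_ge : p.+1`!%:R / e <= ln n%:R by near: n; exact: nbhs_infty_ln_ger.
have ln0 : 0 < ln n%:R :> R by apply: lt_le_trans ln_ge; rewrite divr_gt0 ?ltr0n ?fact_gt0.
rewrite ger0_norm ?divr_ge0 ?exprn_ge0 ?ler0n ?(ltW ln0) //.
rewrite ler_pdivrMr ?(lt_le_trans ltr01) // -(ler_pM2r ln0) -exprSr.
apply: le_trans (lnX_le_fact _ _ n1) _.
by rewrite mulrAC ler_wpM2r ?(le_trans ler01) // mulrC -ler_pdivrMr.
Unshelve. all: by end_near. Qed.

Lemma cvgn_polylog_div (b : nat -> nat) (c : R) p :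
  (\forall n \near \oo, (b n)%:R <= c * ln n%:R) ->
  ((b n)%:R ^+ p / n%:R : R) @[n --> \oo] --> 0.
Proof.
move=> bc.
apply: (@squeeze_cvgr _ _ _ _ (fun=> 0) (fun n => c ^+ p * (ln n%:R ^+ p / n%:R))).
- near=> n; have bcn : (b n)%:R <= c * ln n%:R by near: n.
  rewrite divr_ge0 ?exprn_ge0 ?ler0n //= mulrA -exprMn ler_wpM2r ?invr_ge0 ?ler0n //.
  by rewrite lerXn2r ?nnegrE ?(le_trans _ bcn).
- exact: cvg_cst.
- by rewrite -(mulr0 (c ^+ p)); apply: cvgM; [exact: cvg_cst | exact: cvgn_lnX_div].
Unshelve. all: by end_near. Qed.

End Asymptotics.

Theorem lemma6p2 (R : realType) (k : nat) (a alpha : R) :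
  (3 <= k)%N -> 0 < a -> 0 < alpha ->
  (fun n : nat => prob_good a n k (Num.truncn (alpha * n%:R))) @ \oo --> (1 : R).
Proof.
move=> k3 a0 alpha0.
pose B n := (Num.truncn (a * ln (n%:R : R))).+1.
pose bound n := alpha * ((B n).+1%:R ^+ k.+2 / n%:R).
have bound_cvg0 : bound n @[n --> \oo] --> 0.
  rewrite -(mulr0 alpha); apply: cvgM; first exact: cvg_cst.
  apply: (@cvgn_polylog_div _ _ (a + 2)); near=> n.
  have ln1 : 1 <= ln (n%:R : R) by near: n; exact: nbhs_infty_ln_ger.
  rewrite /B -addn2 natrD mulrDl; have := truncn_le (a * ln (n%:R : R)).
  by rewrite mulr_ge0 ?(ltW a0) ?(le_trans ler01) //; lra.
apply: (@squeeze_cvgr _ _ _ _ (fun n => 1 - bound n) (fun=> 1)); last exact: cvg_cst.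
  near=> n; rewrite prob_goodE uprob_le1 andbT.
  have n0 : (0 < n)%N by near: n; exact: nbhs_infty_gt.
  have aln0 : 0 <= a * ln (n%:R : R) by rewrite mulr_ge0 ?(ltW a0) // ln_ge0 // ler1n.
  rewrite lerBlDr -lerBlDl -uprobC ?card_formula ?expn_gt0 ?muln_gt0 ?n0 //.
  apply: (@le_trans _ _ (uprob (dense_formulas n k (Num.truncn (alpha * n%:R)) (B n)))).
    by apply/le_uprob/fintype.subsetP => Phi; rewrite !inE => /(not_good_dense aln0); rewrite inE.
  apply: (le_trans (uprob_dense_le (B n) (alpha * (B n).+1%:R ^+ k / n%:R) n0 _)).
    by rewrite dense_ratio_le ?truncn_le ?mulr_ge0 ?ler0n ?(ltW alpha0) //= ler_nat.
  suff -> : (B n).+1%:R ^+ 2 * (alpha * (B n).+1%:R ^+ k / n%:R) = bound n by [].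
  by rewrite /bound !exprS; ring.
by rewrite -[X in _ --> X]subr0; apply: cvgB => //; exact: cvg_cst.
Unshelve. all: by end_near. Qed.
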